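(* Let $U_1,U_2,V_1,V_2$ be four real random variables defined on a common probability space such that (1) $U_1$ and $U_2$ have the same distribution, and (2) for all $i,j\in\{1,2\}$, $U_i$ and $V_j$ are independent. If $U_1+V_1=U_2+V_2$ almost surely, then $U_1=U_2$ almost surely. *)

From HB Require Import structures.
From mathcomp Require Import all_boot all_order all_algebra.
From mathcomp Require Import all_classical all_reals all_analysis.
Set Implicit Arguments. Unset Strict Implicit. Unset Printing Implicit Defensive.
Import Order.TTheory GRing.Theory Num.Theory.
Local Open Scope classical_set_scope.
Local Open Scope ring_scope.

Definition same_distribution d (T : measurableType d) (R : realType)
  (P : probability T R) (X Y : {RV P >-> R}) : Prop :=
  forall A : set R, measurable A -> distribution P X A = distribution P Y A.

Definition indep_RV d (T : measurableType d) (R : realType)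
  (P : probability T R) (X Y : {RV P >-> R}) : Prop :=
  forall A B : set R, measurable A -> measurable B ->
    P (X @^-1` A `&` Y @^-1` B) = (P (X @^-1` A) * P (Y @^-1` B))%E.

From HB Require Import structures.
From mathcomp Require Import all_boot all_order all_algebra.
From mathcomp Require Import all_classical all_reals all_analysis.
From mathcomp Require Import lra.
Import Order.TTheory GRing.Theory Num.Theory.
Local Open Scope classical_set_scope.
Local Open Scope ring_scope.

(* Fix levels s and r and put A = {U1 <= s}, B = {U2 <= s}, C = {V1 > r},
   E = {V2 > r}.  Equality of laws and independence give P(A C) = P(B C) and
   P(A E) = P(B E), while U1 + V1 = U2 + V2 makes A E \ (B u C) and
   B C \ (A u E) null.  Inclusion-exclusion then forces the crossing event
   {U1 <= s < U2, V2 <= r < V1} to be null.  On {U1 < U2} we have V2 < V1, so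
   a rational choice of s and r puts every point of {U1 < U2} in one of
   countably many crossing events; hence U2 <= U1 a.s., and by symmetry
   U1 = U2 a.s. *)

Section finite_measure_bookkeeping.
Context d (T : measurableType d) (R : realType).
Variable mu : {finite_measure set T -> \bar R}.

Lemma measureIDD_eq0 (A B C E : set T) :
  measurable A -> measurable B -> measurable C -> measurable E ->
  mu (A `&` C) = mu (B `&` C) -> mu (A `&` E) = mu (B `&` E) ->
  mu (A `&` E `\` B `\` C) = 0%E -> mu (B `&` C `\` A `\` E) = 0%E ->
  mu (A `&` C `\` B `\` E) = 0%E.
Proof.
move=> mA mB mC mE eqC eqE nullAE nullBC.
pose p S := fine (mu S).
have pE S : measurable S -> mu S = (p S)%:E.
  by move=> mS; rewrite /p fineK // fin_num_measure.
have p_ge0 S : 0 <= p S by rewrite /p fine_ge0.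
have pDI S F : measurable S -> measurable F -> p S = p (S `\` F) + p (S `&` F).
  move=> mS mF; rewrite /p (measureDI mu mS mF) fineD //; apply: fin_num_measure.
    exact: measurableD.
  exact: measurableI.
have peq S F : measurable S -> measurable F -> mu S = mu F -> p S = p F.
  by move=> mS mF; rewrite !pE // => -[].
have mAC : measurable (A `&` C) by exact: measurableI.
have mAE : measurable (A `&` E) by exact: measurableI.
have mBC : measurable (B `&` C) by exact: measurableI.
have mBE : measurable (B `&` E) by exact: measurableI.
have hC := peq _ _ mAC mBC eqC; have hE := peq _ _ mAE mBE eqE.
have n1 : p (A `&` E `\` B `\` C) = 0 by rewrite /p nullAE.
have n2 : p (B `&` C `\` A `\` E) = 0 by rewrite /p nullBC.
have dAC := pDI _ _ mAC mB; have dBC := pDI _ _ mBC mA.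
have dAE := pDI _ _ mAE mB; have dBE := pDI _ _ mBE mA.
have dACE := pDI _ _ (measurableD mAC mB) mE.
have dAEC := pDI _ _ (measurableD mAE mB) mC.
have dBCE := pDI _ _ (measurableD mBC mA) mE.
have dBEC := pDI _ _ (measurableD mBE mA) mC.
have e1 : A `&` C `&` B = B `&` C `&` A.
  by apply/seteqP; split => x; rewrite /setI /setD /=; tauto.
have e2 : A `&` E `&` B = B `&` E `&` A.
  by apply/seteqP; split => x; rewrite /setI /setD /=; tauto.
have e3 : (A `&` C `\` B) `&` E = (A `&` E `\` B) `&` C.
  by apply/seteqP; split => x; rewrite /setI /setD /=; tauto.
have e4 : (B `&` C `\` A) `&` E = (B `&` E `\` A) `&` C.
  by apply/seteqP; split => x; rewrite /setI /setD /=; tauto.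
rewrite e1 in dAC; rewrite e2 in dAE; rewrite e3 in dACE; rewrite e4 in dBCE.
(* The common pieces cancel: p(A C \ B \ E) + p(B E \ A \ C) = 0. *)
suff p0 : p (A `&` C `\` B `\` E) = 0.
  by rewrite pE ?p0 //; apply: measurableD => //; exact: measurableD.
have := p_ge0 (A `&` C `\` B `\` E); have := p_ge0 (B `&` E `\` A `\` C).
lra.
Qed.

End finite_measure_bookkeeping.

Section swapping_independent_parts.
Context {d} {T : measurableType d} {R : realType} {P : probability T R}.

Lemma indep_same_distributionI (U1 U2 V : {RV P >-> R}) (A C : set R) :
  same_distribution U1 U2 -> indep_RV U1 V -> indep_RV U2 V ->
  measurable A -> measurable C ->
  P (U1 @^-1` A `&` V @^-1` C) = P (U2 @^-1` A `&` V @^-1` C).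
Proof. by move=> U12 U1V U2V mA mC; rewrite U1V // U2V // -[P _]/(distribution P U1 A) U12. Qed.

Context {U1 U2 V1 V2 : {RV P >-> R}}.
Hypothesis U12 : same_distribution U1 U2.
Hypotheses (U1V1 : indep_RV U1 V1) (U1V2 : indep_RV U1 V2).
Hypotheses (U2V1 : indep_RV U2 V1) (U2V2 : indep_RV U2 V2).
Hypothesis sumUV : {ae P, forall x, U1 x + V1 x = U2 x + V2 x}.

Lemma ae_not_crossing (s r : R) :
  {ae P, forall x, ~ (U1 x <= s < U2 x /\ V2 x <= r < V1 x)}.
Proof.
pose A := U1 @^-1` `]-oo, s]; pose B := U2 @^-1` `]-oo, s].
pose C := V1 @^-1` `]r, +oo[; pose E := V2 @^-1` `]r, +oo[.
have mA : measurable A by exact: measurable_funPTI.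
have mB : measurable B by exact: measurable_funPTI.
have mC : measurable C by exact: measurable_funPTI.
have mE : measurable E by exact: measurable_funPTI.
have mIDD (F G H K : set T) : measurable F -> measurable G -> measurable H ->
    measurable K -> measurable (F `&` G `\` H `\` K).
  by move=> mF mG mH mK; apply: measurableD => //; apply: measurableD => //;
    exact: measurableI.
have null_of_sum_neq (X : set T) : measurable X ->
    (forall x, X x -> U1 x + V1 x <> U2 x + V2 x) -> P X = 0%E.
  have [N [mN PN0 sumN]] := sumUV.
  by move=> mX neqX; apply: (subset_measure0 mX mN _ PN0) => x /neqX; exact: sumN.
exists (A `&` C `\` B `\` E); split; first exact: mIDD.
- apply: measureIDD_eq0 => //.
  + exact: indep_same_distributionI.
  + exact: indep_same_distributionI.
  + apply: null_of_sum_neq => [|x [[[]]]]; first exact: mIDD.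
    rewrite /A /B /C /E /= !in_itv /= !andbT.
    move=> ? ? /negP; rewrite -ltNge => ? /negP; rewrite -leNgt => ?; lra.
  + apply: null_of_sum_neq => [|x [[[]]]]; first exact: mIDD.
    rewrite /A /B /C /E /= !in_itv /= !andbT.
    move=> ? ? /negP; rewrite -ltNge => ? /negP; rewrite -leNgt => ?; lra.
- move=> x /= /contrapT [/andP[U1s sU2] /andP[V2r rV1]].
  rewrite /A /B /C /E /= !in_itv /= !andbT.
  by split; [split => //|]; apply/negP; rewrite -?ltNge -?leNgt.
Qed.

Lemma ae_U2_le_U1 : {ae P, forall x, U2 x <= U1 x}.
Proof.
pose q n : rat * rat := odflt (0, 0) (unpickle n).
have := ae_foralln (fun n => ae_not_crossing (ratr (q n).1) (ratr (q n).2)).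
apply: filterS2 sumUV => x sum_x no_crossing; rewrite leNgt; apply/negP => U12x.
have /rat_in_itvoo[q1] := U12x; rewrite in_itv /= => /andP[U1q1 q1U2].
have /rat_in_itvoo[q2] : V2 x < V1 x by lra.
rewrite in_itv /= => /andP[V2q2 q2V1].
apply: (no_crossing (pickle (q1, q2))); rewrite /q pickleK /=.
by rewrite (ltW U1q1) q1U2 (ltW V2q2) q2V1.
Qed.

End swapping_independent_parts.

Theorem mainTheorem2 (d : measure_display) (T : measurableType d) (R : realType)
  (P : probability T R) (U1 U2 V1 V2 : {RV P >-> R}) :
  same_distribution U1 U2 ->
  indep_RV U1 V1 -> indep_RV U1 V2 -> indep_RV U2 V1 -> indep_RV U2 V2 ->
  {ae P, forall x, U1 x + V1 x = U2 x + V2 x} ->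
  {ae P, forall x, U1 x = U2 x}.
Proof.
move=> U12 U1V1 U1V2 U2V1 U2V2 sumUV.
have U21 : same_distribution U2 U1 by move=> A mA; rewrite U12.
have sumVU : {ae P, forall x, U2 x + V2 x = U1 x + V1 x} by apply: filterS sumUV.
have le21 := ae_U2_le_U1 U12 U1V1 U1V2 U2V1 U2V2 sumUV.
have le12 := ae_U2_le_U1 U21 U2V2 U2V1 U1V2 U1V1 sumVU.
by apply: filterS2 le21 le12 => x ? ?; apply/eqP; rewrite eq_le; apply/andP.
Qed.
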